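(* Let $K\ge 2$, $\mathbf{V}\in\mathbb{C}^{n\times r}$, and let $\tilde{\mathbf{V}}\in\mathbb{R}^{B_Kn\times 2r}$ and the coordinate groups $\mathcal{G}^{(i)}$ be as in the context. If $\mathcal{I}\subset[B_Kn]$ with $|\mathcal{I}|=2r-1$ contains three or more indices from the same coordinate group $\mathcal{G}^{(i)}$, then $\mathrm{rank}(\tilde{\mathbf{V}}_{\mathcal{I},:})<2r-1$.
   Context: $B_K=K/2$ if $K$ is even and $B_K=K$ if $K$ is odd; $\rho_m=e^{-\mathrm{i}\pi(2m+1)/K}$ for $m\in\{0,\dots,B_K-1\}$. $\tilde{\mathbf{V}}$ has rows indexed by $j=i+mn$ ($i\in[n]$, $m\in\{0,\dots,B_K-1\}$), and row $j$ equals $[\mathrm{Re}(\rho_m\mathbf{V}_{i,:}),\ \mathrm{Im}(\rho_m\mathbf{V}_{i,:})]\in\mathbb{R}^{2r}$. The coordinate group $\mathcal{G}^{(i)}$ is the set of row indices $\{i,i+n,\dots,i+(B_K-1)n\}$. $\tilde{\mathbf{V}}_{\mathcal{I},:}$ is the submatrix of rows indexed by $\mathcal{I}$. *)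

From mathcomp Require Import all_boot all_order all_algebra.
From mathcomp Require Import reals trigo.
From mathcomp Require Import complex.
Set Implicit Arguments. Unset Strict Implicit. Unset Printing Implicit Defensive.
Import GRing.Theory Num.Theory.
Local Open Scope ring_scope.

Definition BK (K : nat) : nat := if odd K then K else K./2.

(* rho_m = exp(-i pi (2m+1)/K) = cos(pi(2m+1)/K) - i sin(pi(2m+1)/K) *)
Definition rho (R : realType) (K m : nat) : R[i] :=
  let t := pi * (2 * m + 1)%:R / K%:R in
  complex.Complex (cos t) (- sin t).

Definition cRe (R : realType) (z : R[i]) : R := complex.Re z.
Definition cIm (R : realType) (z : R[i]) : R := complex.Im z.

Lemma ltn_mod_ord (b n : nat) (j : 'I_(b * n)) : (j %% n < n)%N.
Proof.
rewrite ltn_mod; case: n j => [|//] j.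
by case: j => j /=; rewrite muln0.
Qed.

Definition jcoord (b n : nat) (j : 'I_(b * n)) : 'I_n := Ordinal (ltn_mod_ord j).

(* Vtilde : rows j = i + m n (i < n, m < B_K), i.e. i = j mod n, m = j div n;
   row j = [Re(rho_m V_{i,:}), Im(rho_m V_{i,:})]. *)
Definition Vtilde (R : realType) (K n r : nat) (V : 'M[R[i]]_(n, r))
  : 'M[R]_(BK K * n, r + r) :=
  row_mx
    (\matrix_(j < BK K * n, k < r)
       cRe (rho R K (j %/ n) * V (jcoord j) k))
    (\matrix_(j < BK K * n, k < r)
       cIm (rho R K (j %/ n) * V (jcoord j) k)).

Definition coord_group (K n : nat) (i : 'I_n) : {set 'I_(BK K * n)} :=
  [set j : 'I_(BK K * n) | (j %% n)%N == i].

Definition subrows (F : Type) (N c : nat) (I : {set 'I_N}) (A : 'M[F]_(N, c))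
  : 'M[F]_(#|I|, c) := rowsub (fun k : 'I_#|I| => enum_val k) A.

(** Every row of [Vtilde] in the coordinate group of [i] is the real image of
    [rho_m V_{i,:}], and multiplying by the complex scalar [rho_m] acts on
    [[Re v, Im v]] as a real combination of [[Re v, Im v]] and
    [[Re (i v), Im (i v)]].  Hence all rows of [I] from one coordinate group
    span at most a plane; if there are at least three of them, the [2r - 1]
    rows of [I] span at most [2 + (2r - 1 - 3) < 2r - 1] dimensions. *)

From mathcomp Require Import all_boot all_order all_algebra.
From mathcomp Require Import reals trigo.
From mathcomp Require Import complex.
From mathcomp Require Import ring zify.
Set Implicit Arguments. Unset Strict Implicit. Unset Printing Implicit Defensive.
Import GRing.Theory Num.Theory.
Local Open Scope ring_scope.

Section SubrowsRank.

Variables (F : fieldType) (N c : nat).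
Implicit Types (I J : {set 'I_N}) (A : 'M[F]_(N, c)).

Lemma row_subrows I A (k : 'I_#|I|) : row k (subrows I A) = row (enum_val k) A.
Proof. exact: row_rowsub. Qed.

Lemma row_sub_subrows I A j : j \in I -> (row j A <= subrows I A)%MS.
Proof.
by move=> jI; rewrite -(enum_rankK_in jI jI) -row_subrows row_sub.
Qed.

Lemma subrows_sub_addsmx p I J A (W : 'M_(p, c)) :
  (forall j, j \in I :&: J -> (row j A <= W)%MS) ->
  (subrows I A <= W + subrows (I :\: J) A)%MS.
Proof.
move=> rowJ; apply/row_subP => k; rewrite row_subrows.
have jI : enum_val k \in I by exact: enum_valP.
case jJ: (enum_val k \in J).
- by apply: submx_trans (addsmxSl _ _); apply: rowJ; rewrite inE jI jJ.
- apply: submx_trans (addsmxSr _ _); apply: row_sub_subrows.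
  by rewrite inE jI jJ.
Qed.

Lemma mxrank_subrows_le p I J A (W : 'M_(p, c)) :
  (forall j, j \in I :&: J -> (row j A <= W)%MS) ->
  (\rank (subrows I A) <= \rank W + #|I :\: J|)%N.
Proof.
move=> /subrows_sub_addsmx /mxrankS le_rank; apply: leq_trans le_rank _.
apply: leq_trans (mxrank_adds_leqif _ _).1 _.
by rewrite leq_add2l rank_leq_row.
Qed.

End SubrowsRank.

Section ReImRows.

Variables (R : realType) (r : nat).

Definition re_im_row (v : 'rV[R[i]]_r) : 'rV[R]_(r + r) :=
  row_mx (map_mx (@cRe R) v) (map_mx (@cIm R) v).

Definition re_im_plane (v : 'rV[R[i]]_r) : 'M[R]_(1 + 1, r + r) :=
  col_mx (re_im_row v) (re_im_row ('i%C *: v)).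

Lemma re_im_row_scale (z : R[i]) (v : 'rV[R[i]]_r) :
  re_im_row (z *: v) = row_mx (cRe z)%:M (cIm z)%:M *m re_im_plane v.
Proof.
rewrite mul_row_col !mul_scalar_mx !scale_row_mx add_row_mx.
congr row_mx; apply/rowP => k; rewrite !mxE;
  case: z (v 0 k) => [a b] [x y]; rewrite /cRe /cIm /=; ring.
Qed.

Lemma re_im_row_scale_sub (z : R[i]) (v : 'rV[R[i]]_r) :
  (re_im_row (z *: v) <= re_im_plane v)%MS.
Proof. by rewrite re_im_row_scale submxMl. Qed.

End ReImRows.

Lemma row_Vtilde (R : realType) (K n r : nat) (V : 'M[R[i]]_(n, r))
  (j : 'I_(BK K * n)) :
  row j (Vtilde K V) = re_im_row (rho R K (j %/ n) *: row (jcoord j) V).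
Proof.
by rewrite /Vtilde row_row_mx; congr row_mx; apply/rowP => k; rewrite !mxE.
Qed.

Lemma row_Vtilde_sub_plane (R : realType) (K n r : nat) (V : 'M[R[i]]_(n, r))
  (i : 'I_n) (j : 'I_(BK K * n)) :
  j \in coord_group K i -> (row j (Vtilde K V) <= re_im_plane (row i V))%MS.
Proof.
rewrite inE => /eqP ji.
have coord_j : jcoord j = i by exact: val_inj.
by rewrite row_Vtilde coord_j re_im_row_scale_sub.
Qed.

Theorem lemma8 (R : realType) (K n r : nat) (V : 'M[R[i]]_(n, r))
  (I : {set 'I_(BK K * n)}) :
  (2 <= K)%N ->
  #|I| = (2 * r - 1)%N ->
  (exists i : 'I_n, 3 <= #|I :&: coord_group K i|)%N ->
  (\rank (subrows I (Vtilde K V)) < 2 * r - 1)%N.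
Proof.
move=> _ cardI [i three_in_group].
have group_rows j : j \in I :&: coord_group K i ->
    (row j (Vtilde K V) <= re_im_plane (row i V))%MS.
  by move=> /setIP[_]; exact: row_Vtilde_sub_plane.
have := mxrank_subrows_le group_rows.
have := rank_leq_row (re_im_plane (row i V)).
have := subset_leq_card (subsetIl I (coord_group K i)).
rewrite cardsD.
move: (\rank (subrows I _)) (\rank (re_im_plane _)) => rk rk_plane.
(* [\rank] is typed in the [nmodType] carrier of [nat], which [lia] does not see through. *)
change nat in rk; change nat in rk_plane.
rewrite cardI; move: three_in_group; clear; lia.
Qed.
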